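(* Let $L$ be an extension of $\mathbb{Z}_\mathrm{max}$ with $\mathrm{ui}(L/\mathbb{Z}_\mathrm{max})<\infty$. Then $L\cong F^{(n)}$ as extensions of $\mathbb{Z}_\mathrm{max}$ for some positive integer $n$.
   Context: A semifield is a commutative semiring (both operations commutative monoids, distributive law) in which every nonzero element is a unit. $\mathbb{Z}_\mathrm{max}=\mathbb{Z}\cup\{-\infty\}$ is the semifield with addition $\max$ and multiplication ordinary addition; writing $u$ for the integer $1$ in it, $\mathbb{Z}_\mathrm{max}=\{0\}\cup\{u^k:k\in\mathbb{Z}\}$. An extension of a semifield $K$ is a semifield $L$ with an injective homomorphism $K\to L$. The unit index is $\mathrm{ui}(L/K)=|L^\times/K^\times|$. For a positive integer $n$, $F^{(n)}$ is the extension of $\mathbb{Z}_\mathrm{max}$ given by $\mathbb{Z}_\mathrm{max}$ itself with embedding $u^k\mapsto u^{nk}$, $0\mapsto 0$. An isomorphism of extensions is a semiring isomorphism compatible with the embeddings. *)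

From Stdlib Require Import ZArith List.
Open Scope Z_scope.

Record srStruct := SrStruct {
  car :> Type;
  sadd : car -> car -> car;
  smul : car -> car -> car;
  szero : car;
  sone : car }.

Arguments sadd {s} _ _.
Arguments smul {s} _ _.
Arguments szero {s}.
Arguments sone {s}.

Definition is_unit (S : srStruct) (x : S) : Prop := exists y : S, smul x y = sone.

Definition is_semifield (S : srStruct) : Prop :=
  (forall x y z : S, sadd x (sadd y z) = sadd (sadd x y) z) /\
  (forall x y : S, sadd x y = sadd y x) /\
  (forall x : S, sadd szero x = x) /\
  (forall x y z : S, smul x (smul y z) = smul (smul x y) z) /\
  (forall x y : S, smul x y = smul y x) /\
  (forall x : S, smul sone x = x) /\
  (forall x y z : S, smul x (sadd y z) = sadd (smul x y) (smul x z)) /\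
  (forall x : S, smul szero x = szero) /\
  (forall x : S, x <> szero -> is_unit S x).

Definition is_hom (S T : srStruct) (f : S -> T) : Prop :=
  f szero = szero /\ f sone = sone /\
  (forall x y, f (sadd x y) = sadd (f x) (f y)) /\
  (forall x y, f (smul x y) = smul (f x) (f y)).

(* Z_max = Z ∪ {-oo}; None is -oo (the zero), Some k is u^k. *)
Definition zmax_add (a b : option Z) : option Z :=
  match a, b with
  | None, _ => b
  | _, None => a
  | Some x, Some y => Some (Z.max x y)
  end.

Definition zmax_mul (a b : option Z) : option Z :=
  match a, b with
  | Some x, Some y => Some (x + y)
  | _, _ => None
  end.

Definition Zmax : srStruct := SrStruct (option Z) zmax_add zmax_mul None (Some 0).

Definition is_extension (L : srStruct) (f : Zmax -> L) : Prop :=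
  is_semifield L /\ is_hom Zmax L f /\ (forall a b, f a = f b -> a = b).

(* ui(L/K) < oo : the quotient group L^x / f(K^x) is finite, i.e. finitely many
   units represent every coset x f(K^x). *)
Definition finite_unit_index (K L : srStruct) (f : K -> L) : Prop :=
  exists reps : list L,
    (forall r, In r reps -> is_unit L r) /\
    (forall x : L, is_unit L x ->
       exists r k, In r reps /\ is_unit K k /\ x = smul r (f k)).

(* F^(n): Z_max with embedding u^k |-> u^(n k), 0 |-> 0. *)
Definition Fn_emb (n : Z) (a : Zmax) : Zmax :=
  match a with
  | None => None
  | Some k => Some (n * k)
  end.

Definition ext_iso (K L L' : srStruct) (f : K -> L) (g : K -> L') (phi : L -> L') : Prop :=
  is_hom L L' phi /\
  (exists psi : L' -> L, (forall x, psi (phi x) = x) /\ (forall y, phi (psi y) = y)) /\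
  (forall a, phi (f a) = g a).

From Stdlib Require Import ZArith List Lia Ring Classical ClassicalEpsilon.
Open Scope Z_scope.

(* Every nonzero x of L has a power in the image of f, and since there are only
   finitely many cosets one exponent D works for all x: x^D = f(u^c).  L is
   idempotent (1 + 1 = f(u^(max 0 0)) = 1), and in an idempotent semifield
   x^D <= y^D implies x <= y, where x <= y means x + y = y: for z = x/y with
   z^D <= 1 one gets (1 + z)^D = (1 + z)^(D-1), so 1 + z = 1.  Hence x |-> c
   embeds L^x into Z as an ordered group; its image is a subgroup gZ containing
   D, and x |-> c/g extends to an isomorphism L = Z_max carrying f to
   u^k |-> u^((D/g) k). *)

Local Notation "x ⊕ y" := (sadd x y) (at level 50, left associativity).
Local Notation "x ⊗ y" := (smul x y) (at level 40, left associativity).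

Lemma pigeonhole {A : Type} (l : list A) (h : nat -> A) :
  (forall i, In (h i) l) -> exists i j, (i < j)%nat /\ h i = h j.
Proof.
  intro Hh. apply NNPP. intro Hno.
  assert (Hnodup : NoDup (map h (seq 0 (S (length l))))).
  { apply NoDup_map_NoDup_ForallPairs; [|apply seq_NoDup].
    intros i j _ _ Eij. destruct (Nat.lt_total i j) as [Hij|[Hij|Hij]]; auto;
      exfalso; apply Hno; eauto. }
  apply NoDup_incl_length with (l' := l) in Hnodup.
  - rewrite length_map, length_seq in Hnodup. lia.
  - intros x Hx. apply in_map_iff in Hx. destruct Hx as [i [<- _]]. auto.
Qed.

Lemma Z_least_positive (P : Z -> Prop) (c : Z) : 0 < c -> P c ->
  exists g, 0 < g /\ P g /\ forall c', 0 < c' < g -> ~ P c'.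
Proof.
  intros Hc HPc. assert (Hc0 : 0 <= c) by lia. revert Hc HPc.
  pattern c. apply Z_lt_induction; [|exact Hc0]. clear c Hc0.
  intros c IH Hc HPc.
  destruct (classic (exists c', 0 < c' < c /\ P c')) as [[c' [Hc' HPc']]|Hmin].
  - apply (IH c'); tauto || lia.
  - exists c. repeat split; auto. intros c' Hc' HPc'. eauto.
Qed.

Lemma Z_subgroup_generator (P : Z -> Prop) (d : Z) :
  (forall a b, P a -> P b -> P (a - b)) -> 0 < d -> P d ->
  exists g, 0 < g /\ forall c, P c <-> (g | c).
Proof.
  intros Psub Hd HPd.
  destruct (Z_least_positive P d Hd HPd) as [g [Hg [HPg Hmin]]].
  assert (HP0 : P 0) by (replace 0 with (g - g) by lia; auto).
  assert (HPmul : forall k, P (k * g)).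
  { assert (HPmul_nat : forall k : nat, P (Z.of_nat k * g)).
    { induction k as [|k IH]; [exact HP0|].
      replace (Z.of_nat (S k) * g) with (Z.of_nat k * g - (0 - g)) by lia. auto. }
    intro k. destruct (Z_le_gt_dec 0 k).
    - replace k with (Z.of_nat (Z.to_nat k)) by lia. auto.
    - replace (k * g) with (0 - Z.of_nat (Z.to_nat (- k)) * g) by lia. auto. }
  exists g. split; [exact Hg|]. intro c. split; [|intros [k ->]; apply HPmul].
  intro HPc. apply Z.mod_divide; [lia|].
  assert (HPr : P (c mod g)) by (rewrite Z.mod_eq, Z.mul_comm by lia; auto).
  pose proof (Z.mod_pos_bound c g Hg).
  destruct (Z.eq_dec (c mod g) 0) as [E|Hne]; [exact E|].
  exfalso. apply (Hmin (c mod g)); [lia|exact HPr].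
Qed.

Fixpoint spow {L : srStruct} (x : L) (n : nat) : L :=
  match n with O => sone | S n => x ⊗ spow x n end.

Section Semifield.

Variable L : srStruct.
Hypothesis HL : is_semifield L.

Lemma semifield_semiring_theory : semi_ring_theory (@szero L) sone sadd smul eq.
Proof.
  destruct HL as (addA & addC & add0 & mulA & mulC & mul1 & mulD & mul0 & _).
  constructor; auto. intros x y z. rewrite mulC, mulD, (mulC z x), (mulC z y). reflexivity.
Qed.

Add Ring semifield_ring : semifield_semiring_theory.

Lemma semifield_inv (x : L) : x <> szero -> exists y, y <> szero /\ x ⊗ y = sone.
Proof.
  intro Hx. destruct HL as (_ & _ & _ & _ & _ & _ & _ & _ & unit_of_neq0).
  destruct (unit_of_neq0 x Hx) as [y Hy].
  exists y. split; [|exact Hy]. intros ->. apply Hx.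
  transitivity (x ⊗ sone); [ring|]. rewrite <- Hy. ring.
Qed.

Lemma mul_neq0 (x y : L) : x <> szero -> y <> szero -> x ⊗ y <> szero.
Proof.
  intros Hx Hy Exy. destruct (semifield_inv x Hx) as [xi [_ Hxi]]. apply Hy.
  transitivity ((x ⊗ xi) ⊗ y); [rewrite Hxi; ring|].
  transitivity (xi ⊗ (x ⊗ y)); [ring|]. rewrite Exy; ring.
Qed.

Lemma mulIr (a b c : L) : c <> szero -> a ⊗ c = b ⊗ c -> a = b.
Proof.
  intros Hc E. destruct (semifield_inv c Hc) as [ci [_ Hci]].
  transitivity (a ⊗ (c ⊗ ci)); [rewrite Hci; ring|].
  transitivity (a ⊗ c ⊗ ci); [ring|]. rewrite E.
  transitivity (b ⊗ (c ⊗ ci)); [ring|]. rewrite Hci. ring.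
Qed.

Lemma spowD (x : L) (m n : nat) : spow x (m + n) = spow x m ⊗ spow x n.
Proof. induction m as [|m IH]; simpl; [|rewrite IH]; ring. Qed.

Lemma spowM (x : L) (m n : nat) : spow x (m * n) = spow (spow x m) n.
Proof.
  induction n as [|n IH]; simpl; [now rewrite Nat.mul_0_r|].
  rewrite Nat.mul_succ_r, spowD, IH. ring.
Qed.

Lemma spowMn (x y : L) (n : nat) : spow (x ⊗ y) n = spow x n ⊗ spow y n.
Proof. induction n as [|n IH]; simpl; [|rewrite IH]; ring. Qed.

Lemma spow_neq0 (x : L) (n : nat) : x <> szero -> spow x n <> szero.
Proof.
  intro Hx. induction n as [|n IH]; simpl; [|exact (mul_neq0 _ _ Hx IH)].
  intro E. apply Hx. transitivity (x ⊗ sone); [ring|]. rewrite E. ring.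
Qed.

Section Idempotent.

Hypothesis one_neq0 : sone <> szero :> L.
Hypothesis addxx : forall x : L, x ⊕ x = x.

Lemma add_eq0 (x y : L) : x ⊕ y = szero -> x = szero.
Proof.
  intro E. transitivity (x ⊕ (x ⊕ y)); [rewrite E; ring|].
  transitivity (x ⊕ x ⊕ y); [ring|]. rewrite addxx. exact E.
Qed.

Lemma spow_1D_succ (z : L) (n : nat) :
  spow (sone ⊕ z) (S n) = spow (sone ⊕ z) n ⊕ spow z (S n).
Proof.
  induction n as [|n IH]; [simpl; ring|].
  change (spow (sone ⊕ z) (S (S n))) with ((sone ⊕ z) ⊗ spow (sone ⊕ z) (S n)).
  change (spow z (S (S n))) with (z ⊗ spow z (S n)).
  rewrite IH.
  transitivity ((sone ⊕ z) ⊗ spow (sone ⊕ z) n ⊕ spow z (S n) ⊕ z ⊗ spow z (S n));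
    [ring|].
  change ((sone ⊕ z) ⊗ spow (sone ⊕ z) n) with (spow (sone ⊕ z) (S n)). rewrite IH.
  transitivity (spow (sone ⊕ z) n ⊕ (spow z (S n) ⊕ spow z (S n)) ⊕ z ⊗ spow z (S n));
    [ring|].
  rewrite addxx. reflexivity.
Qed.

Lemma one_le_spow_1D (z : L) (n : nat) : sone ⊕ spow (sone ⊕ z) n = spow (sone ⊕ z) n.
Proof.
  induction n as [|n IH]; [exact (addxx sone)|].
  rewrite spow_1D_succ. transitivity (sone ⊕ spow (sone ⊕ z) n ⊕ spow z (S n)); [ring|].
  rewrite IH. reflexivity.
Qed.

Lemma le1_of_spowS_le1 (z : L) (m : nat) : spow z (S m) ⊕ sone = sone -> z ⊕ sone = sone.
Proof.
  intro Hz.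
  assert (Hstable : spow (sone ⊕ z) (S m) = sone ⊗ spow (sone ⊕ z) m).
  { rewrite spow_1D_succ, <- (one_le_spow_1D z m) at 1.
    transitivity (spow (sone ⊕ z) m ⊕ (spow z (S m) ⊕ sone)); [ring|].
    rewrite Hz. transitivity (sone ⊕ spow (sone ⊕ z) m); [ring|].
    rewrite one_le_spow_1D. ring. }
  assert (Hnz : sone ⊕ z <> szero) by (intro E; exact (one_neq0 (add_eq0 _ _ E))).
  transitivity (sone ⊕ z); [ring|].
  exact (mulIr _ _ _ (spow_neq0 _ m Hnz) Hstable).
Qed.

Lemma le_of_spow_le (x y : L) (n : nat) : (0 < n)%nat -> y <> szero ->
  spow x n ⊕ spow y n = spow y n -> x ⊕ y = y.
Proof.
  intros Hn Hy Hle. destruct n as [|m]; [lia|].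
  destruct (semifield_inv y Hy) as [yi [_ Hyi]].
  assert (Hxy : x ⊗ yi ⊗ y = x)
    by (transitivity (x ⊗ (y ⊗ yi)); [ring|rewrite Hyi; ring]).
  assert (Hz : spow (x ⊗ yi) (S m) ⊕ sone = sone).
  { apply (mulIr _ _ (spow y (S m))); [exact (spow_neq0 _ _ Hy)|].
    transitivity (spow (x ⊗ yi ⊗ y) (S m) ⊕ spow y (S m));
      [rewrite (spowMn (x ⊗ yi) y); ring|].
    rewrite Hxy, Hle. ring. }
  transitivity ((x ⊗ yi ⊕ sone) ⊗ y); [rewrite <- Hxy at 1; ring|].
  rewrite (le1_of_spowS_le1 _ _ Hz). ring.
Qed.

End Idempotent.

Section Extension.

Variable f : Zmax -> L.
Hypothesis f_hom : is_hom Zmax L f.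
Hypothesis f_inj : forall a b, f a = f b -> a = b.

Lemma f_zero : f None = szero.
Proof. exact (proj1 f_hom). Qed.

Lemma f_one : f (Some 0) = sone.
Proof. exact (proj1 (proj2 f_hom)). Qed.

Lemma f_max (a b : Z) : f (Some a) ⊕ f (Some b) = f (Some (Z.max a b)).
Proof. destruct f_hom as (_ & _ & f_add & _). rewrite <- f_add. reflexivity. Qed.

Lemma f_mul (a b : Z) : f (Some a) ⊗ f (Some b) = f (Some (a + b)).
Proof. destruct f_hom as (_ & _ & _ & f_smul). rewrite <- f_smul. reflexivity. Qed.

Lemma f_neq0 (k : Z) : f (Some k) <> szero.
Proof. rewrite <- f_zero. intro E. discriminate (f_inj _ _ E). Qed.

Lemma f_Some_inj (a b : Z) : f (Some a) = f (Some b) -> a = b.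
Proof. intro E. injection (f_inj _ _ E). trivial. Qed.

Lemma spow_f (a : Z) (n : nat) : spow (f (Some a)) n = f (Some (Z.of_nat n * a)).
Proof.
  induction n as [|n IH]; simpl spow; [exact (eq_sym f_one)|].
  rewrite IH, f_mul. f_equal. f_equal. lia.
Qed.

Lemma extension_nontrivial : sone <> szero :> L.
Proof. rewrite <- f_one. apply f_neq0. Qed.

Lemma extension_idempotent (x : L) : x ⊕ x = x.
Proof.
  transitivity (x ⊗ (f (Some 0) ⊕ f (Some 0))); [rewrite f_one; ring|].
  rewrite f_max, Z.max_id, f_one. ring.
Qed.

Lemma le_of_spow_image (x y : L) (n : nat) (a b : Z) : (0 < n)%nat -> y <> szero ->
  spow x n = f (Some a) -> spow y n = f (Some b) -> a <= b -> x ⊕ y = y.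
Proof.
  intros Hn Hy Hx Hy' Hab.
  apply (le_of_spow_le extension_nontrivial extension_idempotent _ _ n Hn Hy).
  rewrite Hx, Hy', f_max, Z.max_r by exact Hab. reflexivity.
Qed.

Lemma unit_index_cover : finite_unit_index Zmax L f ->
  exists reps : list L, forall x, x <> szero ->
    exists r k, In r reps /\ x = r ⊗ f (Some k).
Proof.
  intros [reps [_ Hcov]]. exists reps. intros x Hx.
  destruct (semifield_inv x Hx) as [y [_ Hy]].
  destruct (Hcov x (ex_intro _ y Hy)) as [r [[k|] [Hr [[kk Hk] E]]]];
    [eauto|discriminate Hk].
Qed.

Section Cover.

Variable reps : list L.
Hypothesis cover : forall x, x <> szero -> exists r k, In r reps /\ x = r ⊗ f (Some k).

(* Two powers of [a] fall into the same coset of [f]'s image. *)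
Lemma spow_in_image (a : L) : a <> szero ->
  exists m c, (0 < m)%nat /\ spow a m = f (Some c).
Proof.
  intro Ha.
  destruct (choice (fun i r => In r reps /\ exists k, spow a i = r ⊗ f (Some k)))
    as [h Hh].
  { intro i. destruct (cover (spow a i) (spow_neq0 _ i Ha)) as [r [k [Hr E]]]. eauto. }
  destruct (pigeonhole reps h (fun i => proj1 (Hh i))) as [i [j [Hij Ehij]]].
  destruct (proj2 (Hh i)) as [k1 E1]. destruct (proj2 (Hh j)) as [k2 E2].
  exists (j - i)%nat, (k2 - k1). split; [lia|].
  apply (mulIr _ _ (spow a i)); [exact (spow_neq0 _ i Ha)|].
  rewrite <- spowD, Nat.sub_add by lia.
  rewrite E2, E1, <- Ehij.
  transitivity (h i ⊗ (f (Some (k2 - k1)) ⊗ f (Some k1))); [|ring].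
  rewrite f_mul. f_equal. f_equal. f_equal. lia.
Qed.

Lemma common_exponent (l : list L) : exists D, (0 < D)%nat /\
  forall r, In r l -> r <> szero -> exists c, spow r D = f (Some c).
Proof.
  induction l as [|a l [D [HD HDl]]]; [exists 1%nat; split; [lia|intros r []]|].
  assert (Ha : exists m, (0 < m)%nat /\ (a <> szero -> exists c, spow a m = f (Some c))).
  { destruct (classic (a = szero)) as [Ha|Ha].
    - exists 1%nat. split; [lia|tauto].
    - destruct (spow_in_image a Ha) as [m [c [Hm Hc]]]. eauto. }
  destruct Ha as [m [Hm Ham]]. exists (D * m)%nat. split; [lia|].
  intros r [<-|Hr] Hr0.
  - destruct (Ham Hr0) as [c Hc]. exists (Z.of_nat D * c).
    rewrite Nat.mul_comm, spowM, Hc, spow_f. reflexivity.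
  - destruct (HDl r Hr Hr0) as [c Hc]. exists (Z.of_nat m * c).
    rewrite spowM, Hc, spow_f. reflexivity.
Qed.

Lemma uniform_exponent : exists D, (0 < D)%nat /\
  forall x, x <> szero -> exists c, spow x D = f (Some c).
Proof.
  destruct (common_exponent reps) as [D [HD Hreps]]. exists D. split; [exact HD|].
  intros x Hx. destruct (cover x Hx) as [r [k [Hr ->]]].
  destruct (Hreps r Hr) as [c Hc].
  { intros ->. apply Hx. ring. }
  rewrite spowMn, Hc, spow_f, f_mul. eauto.
Qed.

End Cover.

Section Degree.

Variable D : nat.
Hypothesis D_pos : (0 < D)%nat.
Hypothesis D_exp : forall x, x <> szero -> exists c, spow x D = f (Some c).

Definition value_group (c : Z) : Prop := exists x, x <> szero /\ spow x D = f (Some c).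

Lemma value_group_sub (a b : Z) : value_group a -> value_group b -> value_group (a - b).
Proof.
  intros [x [Hx Ex]] [y [Hy Ey]].
  destruct (semifield_inv y Hy) as [yi [Hyi0 Hyi]].
  exists (x ⊗ yi). split; [exact (mul_neq0 _ _ Hx Hyi0)|].
  apply (mulIr _ _ (spow y D)); [exact (spow_neq0 _ D Hy)|].
  rewrite <- spowMn, Ey, f_mul, Z.sub_add, <- Ex.
  f_equal. transitivity (x ⊗ (y ⊗ yi)); [ring|]. rewrite Hyi. ring.
Qed.

Lemma value_group_D : value_group (Z.of_nat D).
Proof.
  exists (f (Some 1)). split; [apply f_neq0|].
  rewrite spow_f, Z.mul_1_r. reflexivity.
Qed.

Section Normalized.

Variables g n : Z.
Hypothesis g_pos : 0 < g.
Hypothesis value_group_iff : forall c, value_group c <-> (g | c).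
Hypothesis D_eq : Z.of_nat D = g * n.

Definition deg (x : L) : Z := epsilon (inhabits 0) (fun k => spow x D = f (Some (g * k))).

Lemma deg_spec (x : L) : x <> szero -> spow x D = f (Some (g * deg x)).
Proof.
  intro Hx. destruct (D_exp x Hx) as [c Hc].
  destruct (proj1 (value_group_iff c) (ex_intro _ x (conj Hx Hc))) as [k ->].
  apply (epsilon_spec (inhabits 0) (fun k => spow x D = f (Some (g * k)))).
  exists k. rewrite Hc, Z.mul_comm. reflexivity.
Qed.

Lemma deg_unique (x : L) (k : Z) : x <> szero -> spow x D = f (Some (g * k)) -> deg x = k.
Proof.
  intros Hx Hk. rewrite (deg_spec x Hx) in Hk.
  apply f_Some_inj, Z.mul_reg_l in Hk; lia.
Qed.

Lemma deg_mul (x y : L) : x <> szero -> y <> szero -> deg (x ⊗ y) = deg x + deg y.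
Proof.
  intros Hx Hy. apply deg_unique; [exact (mul_neq0 _ _ Hx Hy)|].
  rewrite spowMn, (deg_spec x Hx), (deg_spec y Hy), f_mul, Z.mul_add_distr_l.
  reflexivity.
Qed.

Lemma deg_f (k : Z) : deg (f (Some k)) = n * k.
Proof.
  apply deg_unique; [apply f_neq0|].
  rewrite spow_f, D_eq, Z.mul_assoc. reflexivity.
Qed.

Lemma deg_surj (k : Z) : exists x, x <> szero /\ deg x = k.
Proof.
  destruct (proj2 (value_group_iff (g * k)) (Z.divide_factor_l g k)) as [x [Hx Ex]].
  exists x. split; [exact Hx|exact (deg_unique x k Hx Ex)].
Qed.

Lemma le_of_deg_le (x y : L) : x <> szero -> y <> szero -> deg x <= deg y -> x ⊕ y = y.
Proof.
  intros Hx Hy Hle.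
  apply (le_of_spow_image x y D (g * deg x) (g * deg y) D_pos Hy);
    [exact (deg_spec x Hx)|exact (deg_spec y Hy)|nia].
Qed.

Lemma deg_inj (x y : L) : x <> szero -> y <> szero -> deg x = deg y -> x = y.
Proof.
  intros Hx Hy E.
  transitivity (y ⊕ x); [symmetry; apply le_of_deg_le; auto; lia|].
  transitivity (x ⊕ y); [ring|]. apply le_of_deg_le; auto; lia.
Qed.

Definition to_Zmax (x : L) : Zmax :=
  if excluded_middle_informative (x = szero) then None else Some (deg x).

Definition of_Zmax (y : Zmax) : L :=
  match y with
  | None => szero
  | Some k => epsilon (inhabits szero) (fun x => x <> szero /\ deg x = k)
  end.

Lemma to_Zmax0 : to_Zmax szero = None.
Proof. unfold to_Zmax. destruct (excluded_middle_informative _); congruence. Qed.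

Lemma to_Zmax_neq0 (x : L) : x <> szero -> to_Zmax x = Some (deg x).
Proof. intro Hx. unfold to_Zmax. destruct (excluded_middle_informative _); tauto. Qed.

Lemma of_Zmax_spec (k : Z) : of_Zmax (Some k) <> szero /\ deg (of_Zmax (Some k)) = k.
Proof. exact (epsilon_spec (inhabits szero) _ (deg_surj k)). Qed.

Lemma to_Zmax_add (x y : L) : to_Zmax (x ⊕ y) = zmax_add (to_Zmax x) (to_Zmax y).
Proof.
  destruct (excluded_middle_informative (x = szero)) as [->|Hx].
  { rewrite to_Zmax0. replace (szero ⊕ y) with y by ring. reflexivity. }
  destruct (excluded_middle_informative (y = szero)) as [->|Hy].
  { rewrite to_Zmax0. replace (x ⊕ szero) with x by ring. destruct (to_Zmax x); reflexivity. }
  rewrite (to_Zmax_neq0 x Hx), (to_Zmax_neq0 y Hy). cbn [zmax_add].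
  destruct (Z.le_ge_cases (deg x) (deg y)) as [Hle|Hge].
  - rewrite (le_of_deg_le x y Hx Hy Hle), Z.max_r by exact Hle. apply to_Zmax_neq0, Hy.
  - replace (x ⊕ y) with x; [rewrite Z.max_l by exact Hge; apply to_Zmax_neq0, Hx|].
    transitivity (y ⊕ x); [|ring]. symmetry. exact (le_of_deg_le y x Hy Hx Hge).
Qed.

Lemma to_Zmax_mul (x y : L) : to_Zmax (x ⊗ y) = zmax_mul (to_Zmax x) (to_Zmax y).
Proof.
  destruct (excluded_middle_informative (x = szero)) as [->|Hx].
  { rewrite to_Zmax0. replace (szero ⊗ y) with (@szero L) by ring. apply to_Zmax0. }
  destruct (excluded_middle_informative (y = szero)) as [->|Hy].
  { rewrite to_Zmax0. replace (x ⊗ szero) with (@szero L) by ring.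
    rewrite to_Zmax0. destruct (to_Zmax x); reflexivity. }
  rewrite (to_Zmax_neq0 x Hx), (to_Zmax_neq0 y Hy), (to_Zmax_neq0 _ (mul_neq0 _ _ Hx Hy)).
  rewrite deg_mul by assumption. reflexivity.
Qed.

Lemma ext_iso_to_Zmax : ext_iso Zmax L Zmax f (Fn_emb n) to_Zmax.
Proof.
  split; [|split].
  - split; [exact to_Zmax0|split; [|split; [exact to_Zmax_add|exact to_Zmax_mul]]].
    rewrite <- f_one, (to_Zmax_neq0 _ (f_neq0 0)), deg_f, Z.mul_0_r. reflexivity.
  - exists of_Zmax. split.
    + intro x. destruct (excluded_middle_informative (x = szero)) as [->|Hx].
      { rewrite to_Zmax0. reflexivity. }
      rewrite (to_Zmax_neq0 x Hx). destruct (of_Zmax_spec (deg x)) as [Hnz Hdeg].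
      exact (deg_inj _ _ Hnz Hx Hdeg).
    + intros [k|]; [|exact to_Zmax0].
      destruct (of_Zmax_spec k) as [Hnz Hdeg]. rewrite (to_Zmax_neq0 _ Hnz), Hdeg. reflexivity.
  - intros [k|]; cbn [Fn_emb].
    + rewrite (to_Zmax_neq0 _ (f_neq0 k)), deg_f. reflexivity.
    + rewrite f_zero. exact to_Zmax0.
Qed.

End Normalized.

End Degree.

End Extension.

End Semifield.

Theorem mainTheorem4 (L : srStruct) (f : Zmax -> L) :
  is_extension L f ->
  finite_unit_index Zmax L f ->
  exists n : Z, 0 < n /\ exists phi : L -> Zmax, ext_iso Zmax L Zmax f (Fn_emb n) phi.
Proof.
  intros [HL [f_hom f_inj]] Hui.
  destruct (unit_index_cover L HL f Hui) as [reps cover].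
  destruct (uniform_exponent L HL f f_hom reps cover) as [D [D_pos D_exp]].
  destruct (Z_subgroup_generator (value_group L f D) (Z.of_nat D)) as [g [g_pos Hg]].
  - exact (value_group_sub L HL f f_hom D).
  - lia.
  - exact (value_group_D L f f_hom f_inj D).
  - destruct (proj1 (Hg _) (value_group_D L f f_hom f_inj D)) as [n Hn].
    exists n. split; [nia|].
    exists (to_Zmax L f D g).
    apply (ext_iso_to_Zmax L HL f f_hom f_inj D D_pos D_exp g n g_pos Hg). lia.
Qed.
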